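(* Let $\mathbb{F}$ be a field and $(\mathcal{C},f,m)$ a Floer triple over $\mathbb{F}$. Then the associated bidirect system of chain complexes $(CM,p,i,\partial)$, indexed by $A=B=(\mathbb{R},\le)$, is tame; i.e. the maps $\mu_a$ ($a\in\mathbb{R}$), $\nu^b$ ($b\in\mathbb{R}$) and $\mu$ are isomorphisms.
   Context: A Floer triple $(\mathcal{C},f,m)$ over a field $\mathbb{F}$: a set $\mathcal{C}$, $f\colon\mathcal{C}\to\mathbb{R}$, $m\colon\mathcal{C}\times\mathcal{C}\to\mathbb{F}$ with (i) $\mathcal{C}_a^b=\{c: a\le f(c)\le b\}$ finite for all $a\le b$; (ii) $m(c_1,c_2)\ne0\Rightarrow f(c_1)<f(c_2)$; (iii) $\sum_{c_2}m(c_1,c_2)m(c_2,c_3)=0$ for all $c_1,c_3$. $CM_a^b$ is the $\mathbb{F}$-vector space with basis $\mathcal{C}_a^b$ (zero if $a>b$), $\partial_a^b c=\sum_{c'\in\mathcal{C}_a^b}m(c',c)c'$, $HM_a^b$ its homology. For $a_1\le a_2$, $p^b_{a_2,a_1}\colon CM^b_{a_1}\to CM^b_{a_2}$ sends $c\mapsto c$ if $f(c)\ge a_2$ and $c\mapsto0$ otherwise; for $b_1\le b_2$, $i_a^{b_2,b_1}$ is the inclusion $CM_a^{b_1}\to CM_a^{b_2}$. Limits: $\varprojlim_a$ of a system with maps $X_{a_1}\to X_{a_2}$ ($a_1\le a_2$) = compatible families; $\varinjlim_b$ of a system with maps $X^{b_1}\to X^{b_2}$ = direct sum modulo identifying elements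 with their images. Let $L^b=\varprojlim_a CM_a^b$ (w.r.t. $p^b$) and $D_a=\varinjlim_b CM_a^b$ (w.r.t. $i_a$), chain complexes, with canonical maps $i_a^b\colon CM_a^b\to D_a$. Define $\mu_a\colon\varinjlim_b HM_a^b\to H(D_a)$ induced by $[x]\mapsto[i_a^bx]$; $\mu\colon\varinjlim_b H(L^b)\to H(\varinjlim_b L^b)$ induced by the canonical maps $L^b\to\varinjlim_b L$; $\nu^b\colon H(L^b)\to\varprojlim_a HM_a^b$, $[(x_a)_a]\mapsto([x_a])_a$. *)

From Stdlib Require Import Reals ClassicalEpsilon.
From mathcomp Require Import all_boot all_algebra.

Set Implicit Arguments.
Unset Strict Implicit.
Unset Printing Implicit Defensive.

Import GRing.Theory.
Local Open Scope ring_scope.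

Section FloerDefs.

Variables (F : fieldType) (C : Type) (f : C -> R) (m : C -> C -> F).

(* Chains: F-valued functions on the generating set C.  An element of the
   vector space with basis C_a^b is identified with its coefficient function
   (which vanishes outside C_a^b). *)
Definition chain := C -> F.
Definition czero : chain := fun _ => 0.
Definition csub (x y : chain) : chain := fun c => x c - y c.

Definition Cab (a b : R) (c : C) : Prop := Rle a (f c) /\ Rle (f c) b.

Definition fsum (g : C -> F) (s : F) : Prop :=
  exists l : seq C, List.NoDup l /\ (forall c, g c <> 0 -> List.In c l)
                    /\ s = \sum_(c <- l) g c.

(* the value of a finite sum (junk if the support is not finite) *)
Definition Fsum (g : C -> F) : F := epsilon (inhabits 0) (fsum g).

Definition floer_triple : Prop :=
  (forall a b, Rle a b -> exists l : seq C, forall c, Cab a b c -> List.In c l)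
  /\ (forall c1 c2, m c1 c2 <> 0 -> Rlt (f c1) (f c2))
  /\ (forall c1 c3, fsum (fun c2 => m c1 c2 * m c2 c3) 0).

Definition inCM (a b : R) (x : chain) : Prop := forall c, x c <> 0 -> Cab a b c.

Definition dCM (a b : R) (x : chain) : chain := fun c' =>
  if Rle_dec a (f c') then
    if Rle_dec (f c') b then Fsum (fun c => m c' c * x c) else 0
  else 0.

Definition pr (a2 : R) (x : chain) : chain := fun c =>
  if Rle_dec a2 (f c) then x c else 0.

Definition cycleCM (a b : R) (x : chain) : Prop := inCM a b x /\ dCM a b x = czero.
Definition bdryCM (a b : R) (x : chain) : Prop :=
  exists y, inCM a b y /\ dCM a b y = x.
Definition homCM (a b : R) (x1 x2 : chain) : Prop := bdryCM a b (csub x1 x2).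

(* L^b = inverse limit over a of CM_a^b w.r.t. p^b : compatible families *)
Definition family := R -> chain.
Definition inL (b : R) (X : family) : Prop :=
  (forall a, inCM a b (X a)) /\
  (forall a1 a2, Rle a1 a2 -> pr a2 (X a1) = X a2).
Definition dL (b : R) (X : family) : family := fun a => dCM a b (X a).
Definition fzero : family := fun _ => czero.
Definition fsub (X Y : family) : family := fun a => csub (X a) (Y a).

(* nu^b : H(L^b) -> varprojlim_a HM_a^b, [(x_a)_a] |-> ([x_a])_a, is bijective.
   Elements of varprojlim_a HM_a^b are compatible families of homology
   classes, given by representatives K a (cycles of CM_a^b) with
   [p^b_{a2,a1} (K a1)] = [K a2] for a1 <= a2; two such families are equal
   iff they agree classwise. *)
Definition nu_iso (b : R) : Prop :=
  (forall X1 X2 : family,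
      inL b X1 -> dL b X1 = fzero -> inL b X2 -> dL b X2 = fzero ->
      (forall a, homCM a b (X1 a) (X2 a)) ->
      exists Y, inL b Y /\ dL b Y = fsub X1 X2)
  /\
  (forall K : family,
      (forall a, cycleCM a b (K a)) ->
      (forall a1 a2, Rle a1 a2 -> homCM a2 b (pr a2 (K a1)) (K a2)) ->
      exists X, inL b X /\ dL b X = fzero /\ (forall a, homCM a b (X a) (K a))).

End FloerDefs.

(* Generic direct limit (over (R,<=)) of a direct system of chain      *)
(* complexes (X^b, d_b) with transition maps iota b2 b1 : X^b1 -> X^b2, *)
(* all represented inside an ambient type V with zero and subtraction.  *)
(* The direct limit is represented by pairs (b, x) with x in X^b,       *)
(* modulo (b1,x1) ~ (b2,x2) iff iota b b1 x1 = iota b b2 x2 for some    *)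
(* b >= b1, b2 (direct sum modulo identification of elements with      *)
(* their images).                                                      *)
Section DirLim.

Variables (V : Type) (vzero : V) (vsub : V -> V -> V)
          (mem : R -> V -> Prop) (d : R -> V -> V) (iota : R -> R -> V -> V).

Definition dl_eq (e1 e2 : R * V) : Prop :=
  exists b, Rle e1.1 b /\ Rle e2.1 b /\ iota b e1.1 e1.2 = iota b e2.1 e2.2.
Definition dl_valid (e : R * V) : Prop := mem e.1 e.2.
Definition dl_d (e : R * V) : R * V := (e.1, d e.1 e.2).
Definition dl_sub (e1 e2 : R * V) : R * V :=
  let b := Rmax e1.1 e2.1 in (b, vsub (iota b e1.1 e1.2) (iota b e2.1 e2.2)).
Definition dl_cycle (e : R * V) : Prop := dl_valid e /\ dl_eq (dl_d e) (e.1, vzero).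
Definition dl_bdry (e : R * V) : Prop :=
  exists e', dl_valid e' /\ dl_eq (dl_d e') e.
Definition dl_hom (e1 e2 : R * V) : Prop := dl_bdry (dl_sub e1 e2).
Definition cyc (b : R) (x : V) : Prop := mem b x /\ d b x = vzero.
Definition hom (b : R) (x1 x2 : V) : Prop :=
  exists y, mem b y /\ d b y = vsub x1 x2.
(* The canonical map varinjlim_b H(X^b) -> H(varinjlim_b X^b),
   class of (b,[x]) |-> [(b,x)], is bijective.  Elements of
   varinjlim_b H(X^b) are pairs (b,[x]) with x a cycle of X^b, and
   (b1,[x1]) = (b2,[x2]) iff [iota b b1 x1] = [iota b b2 x2] in H(X^b)
   for some b >= b1, b2. *)
Definition dirlim_H_iso : Prop :=
  (forall b1 x1 b2 x2, cyc b1 x1 -> cyc b2 x2 ->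
     dl_hom (b1, x1) (b2, x2) ->
     exists b, Rle b1 b /\ Rle b2 b /\ hom b (iota b b1 x1) (iota b b2 x2))
  /\
  (forall e, dl_cycle e -> exists b x, cyc b x /\ dl_hom (b, x) e).

End DirLim.

(* mu_a : varinjlim_b HM_a^b -> H(D_a), with D_a = varinjlim_b CM_a^b
   (transition maps i_a^{b2,b1} = inclusions) *)
Definition mu_a_iso (F : fieldType) (C : Type) (f : C -> R) (m : C -> C -> F)
    (a : R) : Prop :=
  @dirlim_H_iso (chain F C) (@czero F C) (@csub F C)
    (fun b => inCM f a b) (fun b => dCM f m a b) (fun _ _ x => x).

(* mu : varinjlim_b H(L^b) -> H(varinjlim_b L^b), transition maps
   L^b1 -> L^b2 induced by the inclusions i_a^{b2,b1} *)
Definition mu_iso (F : fieldType) (C : Type) (f : C -> R) (m : C -> C -> F)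
    : Prop :=
  @dirlim_H_iso (family F C) (@fzero F C) (@fsub F C)
    (fun b => inL f b) (fun b => dL f m b) (fun _ _ X => X).

Definition tame (F : fieldType) (C : Type) (f : C -> R) (m : C -> C -> F)
    : Prop :=
  (forall a : R, mu_a_iso f m a) /\ (forall b : R, nu_iso f m b) /\ mu_iso f m.

From Pilot Require Import Defs.
From Stdlib Require Import Reals Lra Classical ClassicalEpsilon FunctionalExtensionality.
From mathcomp Require Import all_boot all_algebra.

Set Implicit Arguments.
Unset Strict Implicit.
Unset Printing Implicit Defensive.
Import GRing.Theory.
Local Open Scope ring_scope.

(* Both direct limits are unions along inclusions, and on CM_a^{b0} (b0 <= b) the
   differential of CM_a^b agrees with that of CM_a^{b0}, because m(c',c) <> 0
   forces f(c') < f(c); so homology commutes with these limits (mu_a and mu).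
   For nu^b the inverse limit over a is computed along a_n = -n.  A compatible
   family of classes lifts to a compatible family of cycles level by level.
   Injectivity is a Mittag-Leffler argument: the projections to CM_{a_n}^b of the
   solution sets of dz = x at deeper levels are cosets of the projections of the
   cycle spaces, a decreasing chain of subspaces of a finite-dimensional space;
   hence they stabilize, and stable images lift. *)

Section FiniteSums.
Variables (F : fieldType) (C : Type).

Lemma big_seq_supp0 (g : C -> F) (l : seq C) :
  (forall c, List.In c l -> g c = 0) -> \sum_(c <- l) g c = 0.
Proof.
elim: l => [|c l IH] gl0; first by rewrite big_nil.
rewrite big_cons gl0 /=; last by left.
by rewrite IH ?add0r // => d ld; apply: gl0; right.
Qed.

Lemma big_NoDup_supp_eq (g : C -> F) (l1 l2 : seq C) :
  List.NoDup l1 -> List.NoDup l2 ->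
  (forall c, g c <> 0 -> (List.In c l1 <-> List.In c l2)) ->
  \sum_(c <- l1) g c = \sum_(c <- l2) g c.
Proof.
elim: l1 l2 => [|c l1 IH] l2 ND1 ND2 same_supp.
  rewrite big_nil big_seq_supp0 // => d l2d.
  have [//|/eqP gd] := eqVneq (g d) 0.
  by have /(same_supp d gd) := l2d.
inversion ND1 as [|? ? l1c ND1']; subst.
have [gc0|/eqP gcN0] := eqVneq (g c) 0.
  rewrite big_cons gc0 add0r; apply: IH => // d gd.
  split => [l1d|/(same_supp d gd) [cd|//]]; first by apply/(same_supp d gd); right.
  by rewrite -cd gc0 in gd.
have [l2a [l2b l2E]] := List.in_split _ _ (proj1 (same_supp c gcN0) (or_introl erefl)).
subst l2.
rewrite big_cons big_cat big_cons /= addrCA -big_cat; congr (_ + _).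
apply: IH => //; first exact: List.NoDup_remove_1 ND2.
move=> d gd; split => ld.
- have : List.In d (l2a ++ c :: l2b) by apply/(same_supp d gd); right.
  rewrite !List.in_app_iff /= => -[|[cd|]]; [by left| |by right].
  by subst d.
- have : List.In d (c :: l1).
    by apply/(same_supp d gd); move: ld; rewrite !List.in_app_iff /=; tauto.
  case=> // cd; subst d.
  by have := List.NoDup_remove_2 _ _ _ ND2.
Qed.

Lemma FsumE (g : C -> F) (l : seq C) :
  List.NoDup l -> (forall c, g c <> 0 -> List.In c l) ->
  Fsum g = \sum_(c <- l) g c.
Proof.
move=> NDl suppl.
have sum_l : fsum g (\sum_(c <- l) g c) by exists l.
have := epsilon_spec (inhabits 0) (fsum g) (ex_intro _ _ sum_l).
rewrite -/(Fsum g) => -[l' [NDl' [suppl' ->]]].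
by apply: big_NoDup_supp_eq => // c gc; split=> _; auto.
Qed.

Lemma Fsum_unique (g : C -> F) s : fsum g s -> Fsum g = s.
Proof. by case=> l [NDl [suppl ->]]; apply: FsumE. Qed.

Lemma Fsum0 (g : C -> F) : (forall c, g c = 0) -> Fsum g = 0.
Proof. by move=> g0; rewrite (@FsumE g [::]) ?big_nil //; constructor. Qed.

Lemma NoDup_cover (P : C -> Prop) (l : seq C) :
  (forall c, P c -> List.In c l) ->
  exists l', List.NoDup l' /\ forall c, P c -> List.In c l'.
Proof.
move=> Pl; have dec (x y : C) : {x = y} + {x <> y} by exact: excluded_middle_informative.
exists (List.nodup dec l); split; first exact: List.NoDup_nodup.
by move=> c /Pl; rewrite List.nodup_In.
Qed.

End FiniteSums.

Section ChainAlgebra.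
Variables (F : fieldType) (C : Type) (f : C -> R).

Local Notation chain := (chain F C).
Local Notation czero := (@czero F C).

Definition lc (k1 k2 : F) (x y : chain) : chain := fun c => k1 * x c + k2 * y c.

Lemma csub_lc (x y : chain) : csub x y = lc 1 (-1) x y.
Proof. by apply: functional_extensionality => c; rewrite /lc /csub mul1r mulN1r. Qed.

Lemma csubxx (x : chain) : csub x x = czero.
Proof. by apply: functional_extensionality => c; rewrite /csub subrr. Qed.

Lemma inCM0 a b : inCM f a b czero.
Proof. by []. Qed.

Lemma inCM_lc a b k1 k2 (x y : chain) :
  inCM f a b x -> inCM f a b y -> inCM f a b (lc k1 k2 x y).
Proof.
move=> xab yab c; rewrite /lc => lcN0.
have [x0|/eqP xN0] := eqVneq (x c) 0; last exact: xab.
by apply: yab => y0; apply: lcN0; rewrite x0 y0 !mulr0 addr0.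
Qed.

Lemma inCM_sub a b (x y : chain) :
  inCM f a b x -> inCM f a b y -> inCM f a b (csub x y).
Proof. by rewrite csub_lc; apply: inCM_lc. Qed.

Lemma inCM_widen a0 b0 a b (x : chain) :
  Rle a a0 -> Rle b0 b -> inCM f a0 b0 x -> inCM f a b x.
Proof.
by move=> aa0 b0b x0 c /x0 [a0c cb0]; split; [apply: Rle_trans a0c | apply: Rle_trans b0b].
Qed.

Lemma pr_inCM a a' b (x : chain) : inCM f a b x -> inCM f a' b (pr f a' x).
Proof. by move=> xab c; rewrite /pr; case: Rle_dec => // a2c /xab [_ cb]. Qed.

Lemma pr_id a b (x : chain) : inCM f a b x -> pr f a x = x.
Proof.
move=> xab; apply: functional_extensionality => c; rewrite /pr.
case: Rle_dec => // ac; by have [//|/eqP /xab [? _]] := eqVneq (x c) 0.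
Qed.

Lemma pr_pr a1 a2 (x : chain) : Rle a1 a2 -> pr f a2 (pr f a1 x) = pr f a2 x.
Proof.
move=> a12; apply: functional_extensionality => c; rewrite /pr.
case: Rle_dec => // a2c; case: Rle_dec => // a1c.
by case: a1c; apply: Rle_trans a2c.
Qed.

Lemma pr_lc a k1 k2 (x y : chain) :
  pr f a (lc k1 k2 x y) = lc k1 k2 (pr f a x) (pr f a y).
Proof.
apply: functional_extensionality => c; rewrite /pr /lc.
by case: Rle_dec => ? //; rewrite !mulr0 addr0.
Qed.

Lemma pr_sub a (x y : chain) : pr f a (csub x y) = csub (pr f a x) (pr f a y).
Proof. by rewrite !csub_lc pr_lc. Qed.

Lemma pr0 a : pr f a czero = czero.
Proof. by apply: functional_extensionality => c; rewrite /pr; case: Rle_dec. Qed.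

End ChainAlgebra.

Section FloerComplex.
Variables (F : fieldType) (C : Type) (f : C -> R) (m : C -> C -> F).
Hypothesis HF : floer_triple f m.

Local Notation chain := (chain F C).
Local Notation czero := (@czero F C).
Local Notation D := (dCM f m).

Lemma Cab_NoDup_cover a b :
  exists l : seq C, List.NoDup l /\ forall c, Cab f a b c -> List.In c l.
Proof.
have [ab|ba] := Rle_dec a b.
  by have [l abl] := proj1 HF a b ab; exact: NoDup_cover abl.
exists [::]; split=> [|c [ac cb]]; first by constructor.
by case: ba; apply: Rle_trans cb.
Qed.

Lemma m_neq0_lt c1 c2 : m c1 c2 <> 0 -> Rlt (f c1) (f c2).
Proof. exact: (proj1 (proj2 HF)). Qed.

Lemma dCM_inCM a b (x : chain) : inCM f a b (D a b x).
Proof. by move=> c; rewrite /dCM; do 2 case: Rle_dec => //. Qed.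

Lemma dCM0 a b : D a b czero = czero.
Proof.
apply: functional_extensionality => c'; rewrite /dCM /czero.
by do 2 case: Rle_dec => ? //; apply: Fsum0 => c; rewrite mulr0.
Qed.

Lemma dCM_sum a b (x : chain) (l : seq C) c' :
  inCM f a b x -> List.NoDup l -> (forall c, Cab f a b c -> List.In c l) ->
  Fsum (fun c => m c' c * x c) = \sum_(c <- l) m c' c * x c.
Proof.
move=> xab NDl ablP; apply: FsumE => // c mxN0; apply/ablP/xab => x0.
by apply: mxN0; rewrite x0 mulr0.
Qed.

(* above the window [a, b] the defining sum vanishes, since m c' c <> 0 forces f c' < f c <= b *)
Lemma dCM_geE a b (x : chain) (l : seq C) c' :
  inCM f a b x -> List.NoDup l -> (forall c, Cab f a b c -> List.In c l) ->
  Rle a (f c') -> D a b x c' = \sum_(c <- l) m c' c * x c.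
Proof.
move=> xab NDl ablP ac'; rewrite /dCM; case: Rle_dec => /= [_|//].
case: Rle_dec => /= [_|c'b]; first exact: (dCM_sum c' xab NDl ablP).
rewrite big_seq_supp0 // => c _.
have [->|/eqP xN0] := eqVneq (x c) 0; first by rewrite mulr0.
have [->|/eqP mN0] := eqVneq (m c' c) 0; first by rewrite mul0r.
by case: c'b; apply: Rle_trans (Rlt_le _ _ (m_neq0_lt mN0)) (proj2 (xab c xN0)).
Qed.

Lemma dCM_lc a b k1 k2 (x y : chain) : inCM f a b x -> inCM f a b y ->
  D a b (lc k1 k2 x y) = lc k1 k2 (D a b x) (D a b y).
Proof.
move=> xab yab; have [l [NDl ablP]] := Cab_NoDup_cover a b.
apply: functional_extensionality => c'; rewrite /lc /dCM.
do 2 case: Rle_dec => [?|?]; rewrite ?mulr0 ?addr0 //.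
rewrite !(dCM_sum c' _ NDl ablP) //; last exact: inCM_lc.
rewrite !mulr_sumr -big_split /=; apply: eq_bigr => c _.
by rewrite mulrDr !mulrA [m c' c * k1]mulrC [m c' c * k2]mulrC.
Qed.

Lemma dCM_sub a b (x y : chain) : inCM f a b x -> inCM f a b y ->
  D a b (csub x y) = csub (D a b x) (D a b y).
Proof. by move=> xab yab; rewrite !csub_lc dCM_lc. Qed.

Lemma dCM_widen a b0 b (x : chain) : inCM f a b0 x -> Rle b0 b -> D a b x = D a b0 x.
Proof.
move=> xab0 b0b; have [l [NDl ablP]] := Cab_NoDup_cover a b.
have abl c : Cab f a b0 c -> List.In c l.
  by move=> [ac cb0]; apply: ablP; split=> //; apply: Rle_trans b0b.
apply: functional_extensionality => c'.
have [ac'|ac'] := Rle_dec a (f c'); last by rewrite /dCM; case: Rle_dec.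
rewrite (dCM_geE _ NDl abl ac') // (dCM_geE _ NDl ablP ac') //.
exact: inCM_widen (Rle_refl a) b0b xab0.
Qed.

Lemma pr_dCM a1 a2 b (x : chain) :
  Rle a1 a2 -> pr f a2 (D a1 b x) = D a2 b (pr f a2 x).
Proof.
move=> a12; apply: functional_extensionality => c'; rewrite /dCM /pr.
case: Rle_dec => // a2c'; case: Rle_dec => [?|]; last by case; apply: Rle_trans a2c'.
case: Rle_dec => ? //; congr Fsum; apply: functional_extensionality => c.
case: Rle_dec => // a2c; have [->|/eqP mN0] := eqVneq (m c' c) 0; first by rewrite !mul0r.
by case: a2c; apply: Rle_trans a2c' (Rlt_le _ _ (m_neq0_lt mN0)).
Qed.

Lemma dCM_dCM a b (x : chain) : inCM f a b x -> D a b (D a b x) = czero.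
Proof.
move=> xab; have [l [NDl ablP]] := Cab_NoDup_cover a b.
apply: functional_extensionality => c''; rewrite {1}/dCM /czero.
case: Rle_dec => // ac''; case: Rle_dec => //= c''b.
rewrite (dCM_sum c'' _ NDl ablP); last exact: dCM_inCM.
have dxE c' : m c'' c' * D a b x c' = m c'' c' * \sum_(c <- l) m c' c * x c.
  have [->|/eqP mN0] := eqVneq (m c'' c') 0; first by rewrite !mul0r.
  by rewrite (dCM_geE _ NDl ablP) //; apply: Rle_trans ac'' (Rlt_le _ _ (m_neq0_lt mN0)).
rewrite (eq_bigr _ (fun c' _ => dxE c')).
under eq_bigr do rewrite mulr_sumr.
rewrite exchange_big /=; apply: big_seq_supp0 => c _.
under eq_bigr do rewrite mulrA.
rewrite -mulr_suml; have [->|/eqP xN0] := eqVneq (x c) 0; first by rewrite mulr0.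
suff -> : \sum_(c' <- l) m c'' c' * m c' c = 0 by rewrite mul0r.
(* the Floer relation (iii), evaluated on a list that covers every nonzero term *)
rewrite -(FsumE (g := fun c' => m c'' c' * m c' c) NDl).
  exact: Fsum_unique (proj2 (proj2 HF) c'' c).
move=> c' mmN0; apply: ablP.
have [m1 m2] : m c'' c' <> 0 /\ m c' c <> 0.
  by split=> m0; apply: mmN0; rewrite m0 ?mul0r ?mulr0.
split; first exact: Rle_trans ac'' (Rlt_le _ _ (m_neq0_lt m1)).
exact: Rle_trans (Rlt_le _ _ (m_neq0_lt m2)) (proj2 (xab c xN0)).
Qed.

Lemma homCM_refl a b (x : chain) : homCM f m a b x x.
Proof. by exists czero; split; [exact: inCM0 | rewrite dCM0 csubxx]. Qed.

Lemma homCM_trans a b (x y z : chain) :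
  homCM f m a b x y -> homCM f m a b y z -> homCM f m a b x z.
Proof.
move=> [u [uab du]] [v [vab dv]]; exists (lc 1 1 u v); split; first exact: inCM_lc.
rewrite dCM_lc // du dv; apply: functional_extensionality => c.
by rewrite /lc /csub !mul1r addrA subrK.
Qed.

Lemma homCM_pr a1 a2 b (x y : chain) :
  Rle a1 a2 -> homCM f m a1 b x y -> homCM f m a2 b (pr f a2 x) (pr f a2 y).
Proof.
move=> a12 [u [uab du]]; exists (pr f a2 u); split; first exact: pr_inCM uab.
by rewrite -(pr_dCM _ _ a12) du pr_sub.
Qed.

End FloerComplex.

Section DirectLimitOfInclusions.
Variables (V : Type) (vzero : V) (vsub : V -> V -> V)
          (mem : R -> V -> Prop) (d : R -> V -> V).
Hypotheses (mem_widen : forall b0 b x, Rle b0 b -> mem b0 x -> mem b x)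
           (d_widen : forall b0 b x, mem b0 x -> Rle b0 b -> d b x = d b0 x)
           (mem0 : forall b, mem b vzero)
           (d0 : forall b, d b vzero = vzero)
           (vsubxx : forall x, vsub x x = vzero).

Lemma dirlim_H_iso_inclusions : dirlim_H_iso vzero vsub mem d (fun _ _ x => x).
Proof.
split=> [b1 x1 b2 x2 _ _|[b x]].
  move=> [[b' y] [/= yb' [b [/= b'b [b12b /= dyE]]]]].
  exists b; split; first exact: Rle_trans (Rmax_l b1 b2) b12b.
  split; first exact: Rle_trans (Rmax_r b1 b2) b12b.
  by exists y; split; [exact: mem_widen b'b yb' | rewrite (d_widen yb' b'b)].
move=> [/= xb [_ [_ [_ /= dx0]]]]; exists b, x; split; first by [].
exists (b, vzero); split; first exact: mem0.
exists (Rmax b b); split; first exact: Rmax_l.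
by split; [exact: Rle_refl | rewrite /= d0 vsubxx].
Qed.

End DirectLimitOfInclusions.

Section DirectLimits.
Variables (F : fieldType) (C : Type) (f : C -> R) (m : C -> C -> F).
Hypothesis HF : floer_triple f m.

Lemma mu_a_iso_holds a : mu_a_iso f m a.
Proof.
apply: dirlim_H_iso_inclusions => [b0 b x b0b| b0 b x xb0 b0b|b|b|x].
- exact: inCM_widen (Rle_refl a) b0b.
- exact: dCM_widen.
- exact: inCM0.
- exact: dCM0.
- exact: csubxx.
Qed.

Lemma mu_iso_holds : mu_iso f m.
Proof.
apply: dirlim_H_iso_inclusions => [b0 b X b0b [Xb0 Xpr]| b0 b X [Xb0 _] b0b|b|b|X].
- by split=> // a; apply: inCM_widen (Rle_refl a) b0b (Xb0 a).
- by apply: functional_extensionality => a; apply: dCM_widen.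
- by split=> [a|a1 a2 _]; [exact: inCM0 | exact: pr0].
- by apply: functional_extensionality => a; apply: dCM0.
- by apply: functional_extensionality => a; apply: csubxx.
Qed.

End DirectLimits.

Section SubspaceChains.
Variables (F : fieldType) (C : Type).

Local Notation chain := (chain F C).
Local Notation czero := (@czero F C).

Definition subspace_on (l : seq C) (W : chain -> Prop) : Prop :=
  [/\ W czero, forall k1 k2 x y, W x -> W y -> W (lc k1 k2 x y)
    & forall x c, W x -> x c <> 0 -> List.In c l].

Lemma decreasing_le (W : nat -> chain -> Prop) :
  (forall k x, W k.+1 x -> W k x) -> forall n k x, (n <= k)%N -> W k x -> W n x.
Proof.
move=> Wdecr n k x /subnK <-; elim: (k - n)%N => [|j IH] //=.
by rewrite addSn => /Wdecr /IH.
Qed.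

(* Induction on the support: split off the subspace of chains vanishing at the
   first basis element c; either every W k has a chain that does not vanish at c,
   and it can be used to clear the c-coordinate, or eventually none has. *)
Lemma subspace_chain_stable (l : seq C) (W : nat -> chain -> Prop) :
  (forall k, subspace_on l (W k)) -> (forall k x, W k.+1 x -> W k x) ->
  exists N, forall k, (N <= k)%N -> forall x, W N x -> W k x.
Proof.
elim: l W => [|c l IH] W Wsub Wdecr.
  exists 0%N => k _ x W0x; have [Wk0 _ _] := Wsub k.
  have [_ _ W0supp] := Wsub 0%N.
  suff -> : x = czero by [].
  apply: functional_extensionality => d; rewrite /czero.
  by have [//|/eqP /(W0supp x d W0x)] := eqVneq (x d) 0.
pose W' k x := W k x /\ x c = 0.
have W'sub k : subspace_on l (W' k).
  have [Wk0 Wklc Wksupp] := Wsub k.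
  split=> [//|k1 k2 x y [Wx xc] [Wy yc]|x d [Wx xc] xd].
  - by split; [exact: Wklc | rewrite /lc xc yc !mulr0 addr0].
  - by case: (Wksupp x d Wx xd) => // cd; subst d.
have [N1 W'stable] := IH W' W'sub (fun k x '(conj Wx xc) => conj (Wdecr k x Wx) xc).
have Wle := decreasing_le Wdecr.
case: (classic (forall k, exists w, W k w /\ w c <> 0)) => [hit|].
  exists N1 => k kN1 x WN1x; have [w [Wkw wc]] := hit k.
  have [_ Wlc _] := Wsub N1; have [_ Wklc _] := Wsub k.
  pose x' := lc 1 (- (x c / w c)) x w.
  have W'x' : W' N1 x'.
    split; first by apply: Wlc WN1x (Wle _ _ _ kN1 Wkw).
    by rewrite /x' /lc mul1r mulNr mulfVK ?subrr //; apply/eqP.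
  have [Wkx' _] := W'stable k kN1 x' W'x'.
  suff -> : x = lc 1 (x c / w c) x' w by apply: Wklc.
  by apply: functional_extensionality => d; rewrite /x' /lc !mul1r mulNr subrK.
move=> /not_all_ex_not [N2 /not_ex_all_not missN2].
exists (maxn N1 N2) => k kN x Wx.
have xc : x c = 0.
  by apply: NNPP => xc; apply: (missN2 x); split=> //; apply: Wle (leq_maxr _ _) Wx.
have W'N1x : W' N1 x by split=> //; apply: Wle (leq_maxl _ _) Wx.
by have [] := W'stable k (leq_trans (leq_maxl _ _) kN) x W'N1x.
Qed.

End SubspaceChains.

Lemma dependent_choice_seq (A : Type) (P : nat -> A -> Prop) (Q : nat -> A -> A -> Prop) x0 :
  P 0%N x0 -> (forall n x, P n x -> exists y, P n.+1 y /\ Q n x y) ->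
  exists g : nat -> A, forall n, P n (g n) /\ Q n (g n) (g n.+1).
Proof.
move=> Px0 lift.
have step n (x : {x | P n x}) : {y | P n.+1 y /\ Q n (proj1_sig x) y}.
  by case: x => x Px; apply: constructive_indefinite_description; exact: lift Px.
pose fix g n : {x | P n x} := match n with
  | 0 => exist _ x0 Px0
  | k.+1 => exist _ (proj1_sig (step k (g k))) (proj1 (proj2_sig (step k (g k)))) end.
exists (fun n => proj1_sig (g n)) => n; split; first exact: proj2_sig (g n).
exact: proj2 (proj2_sig (step n (g n))).
Qed.

Section MittagLeffler.
Variables (T : Type) (pi : nat -> T -> T) (sol : nat -> T -> Prop).
Hypotheses (pi_pi : forall n k z, (n <= k)%N -> pi n (pi k z) = pi n z)
           (sol_pi : forall k k' z, (k <= k')%N -> sol k' z -> sol k (pi k z))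
           (sol_piK : forall n z, sol n z -> pi n z = z)
           (sol_nonempty : forall k, exists z, sol k z).

Definition img n k y := exists z, sol k z /\ y = pi n z.

Lemma img_le n k k' y : (n <= k)%N -> (k <= k')%N -> img n k' y -> img n k y.
Proof.
move=> nk kk' [z [solz ->]]; exists (pi k z); split; first exact: sol_pi solz.
by rewrite pi_pi.
Qed.

Hypothesis img_stable : forall n, exists N, (n <= N)%N /\
  forall k, (N <= k)%N -> forall y, img n N y -> img n k y.

Definition stable_img n y := forall k, (n <= k)%N -> img n k y.

Lemma stable_img_of_img n N K y :
  (n <= N)%N -> (forall k, (N <= k)%N -> forall y, img n N y -> img n k y) ->
  (N <= K)%N -> img n K y -> stable_img n y.
Proof.
move=> nN Nstable NK imgK k nk; have [Nk|kN] := leqP N k.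
  by apply: Nstable => //; apply: img_le nN NK imgK.
by apply: img_le nk _ imgK; apply: leq_trans (ltnW kN) NK.
Qed.

Lemma stable_img_lift n y :
  stable_img n y -> exists y', stable_img n.+1 y' /\ pi n y' = y.
Proof.
move=> ystable; have [N [nN Nstable]] := img_stable n.+1.
have nK : (n <= maxn N n.+1)%N by apply: leq_trans (leqnSn n) (leq_maxr _ _).
have [z [solz ->]] := ystable _ nK.
exists (pi n.+1 z); split; last exact: pi_pi (leqnSn n).
apply: stable_img_of_img nN Nstable (leq_maxl N n.+1) _.
by exists z.
Qed.

Lemma compatible_sol_seq : exists Y : nat -> T, forall n, sol n (Y n) /\ pi n (Y n.+1) = Y n.
Proof.
have [y0 y0stable] : exists y0, stable_img 0 y0.
  have [N [N0 Nstable]] := img_stable 0; have [z solz] := sol_nonempty N.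
  by exists (pi 0 z); apply: stable_img_of_img N0 Nstable (leqnn N) _; exists z.
have [Y HY] := dependent_choice_seq y0stable stable_img_lift.
exists Y => n; split; last exact: (proj2 (HY n)).
have [z [solz ->]] := proj1 (HY n) n (leqnn n).
by rewrite sol_piK.
Qed.

End MittagLeffler.

Definition lvl (n : nat) : R := Ropp (INR n).

Lemma lvl_le n k : (n <= k)%N -> Rle (lvl k) (lvl n).
Proof. by move=> /leP nk; apply: Ropp_le_contravar; apply: le_INR. Qed.

Lemma lvl_below r : exists n, Rle (lvl n) r.
Proof.
have [n n_gt] := INR_archimed 1 (Ropp r) Rlt_0_1.
by exists n; rewrite /lvl; rewrite Rmult_1_r in n_gt; lra.
Qed.

Section InverseLimitOfSequence.
Variables (F : fieldType) (C : Type) (f : C -> R) (m : C -> C -> F).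
Hypothesis HF : floer_triple f m.

Lemma family_of_compatible_seq b (Z : Defs.family F C) (Y : nat -> chain F C) :
  inL f b Z ->
  (forall n, inCM f (lvl n) b (Y n) /\ dCM f m (lvl n) b (Y n) = Z (lvl n)) ->
  (forall n, pr f (lvl n) (Y n.+1) = Y n) ->
  exists X, [/\ inL f b X, dL f m b X = Z
              & forall n r, Rle (lvl n) r -> X r = pr f r (Y n)].
Proof.
move=> [_ Zpr] YZ Ypr.
have Ycompat n k : (n <= k)%N -> pr f (lvl n) (Y k) = Y n.
  move=> /subnK <-; elim: (k - n)%N => [|j IH] /=; first exact: pr_id (proj1 (YZ n)).
  by rewrite addSn -(pr_pr _ _ (lvl_le (leq_addl j n))) Ypr.
have Yindep n k r : Rle (lvl n) r -> Rle (lvl k) r -> pr f r (Y n) = pr f r (Y k).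
  move=> nr kr; rewrite -(Ycompat n (maxn n k)) ?leq_maxl //.
  by rewrite -(Ycompat k (maxn n k)) ?leq_maxr // !pr_pr.
pose N r := proj1_sig (constructive_indefinite_description _ (lvl_below r)).
have N_below r : Rle (lvl (N r)) r.
  exact: proj2_sig (constructive_indefinite_description _ (lvl_below r)).
exists (fun r => pr f r (Y (N r))); split=> [| |n r nr]; last exact: Yindep.
- split=> [r|a1 a2 a12]; first exact: pr_inCM (proj1 (YZ _)).
  by rewrite pr_pr //; apply: Yindep (N_below a2); apply: Rle_trans (N_below a1) a12.
- apply: functional_extensionality => r.
  by rewrite /dL -(pr_dCM HF _ _ (N_below r)) (proj2 (YZ _)) Zpr.
Qed.

End InverseLimitOfSequence.

Section BoundaryLift.
Variables (F : fieldType) (C : Type) (f : C -> R) (m : C -> C -> F).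
Hypothesis HF : floer_triple f m.
Variables (b : R) (Z : Defs.family F C).
Hypotheses (ZL : inL f b Z) (Zbdry : forall a, bdryCM f m a b (Z a)).

Local Notation chain := (chain F C).
Local Notation czero := (@czero F C).

Let sol k (z : chain) := inCM f (lvl k) b z /\ dCM f m (lvl k) b z = Z (lvl k).
Let cyc_img n k (y : chain) :=
  exists z, cycleCM f m (lvl k) b z /\ y = pr f (lvl n) z.
Let pi n : chain -> chain := pr f (lvl n).

Lemma pi_pi n k z : (n <= k)%N -> pi n (pi k z) = pi n z.
Proof. by move=> nk; apply: pr_pr; apply: lvl_le. Qed.

Lemma sol_pi k k' z : (k <= k')%N -> sol k' z -> sol k (pi k z).
Proof.
move=> kk' [zk' dz]; have lk := lvl_le kk'; split; first exact: pr_inCM zk'.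
by rewrite -(pr_dCM HF _ _ lk) dz (proj2 ZL _ _ lk).
Qed.

Lemma cyc_img_le n k k' y : (n <= k)%N -> (k <= k')%N -> cyc_img n k' y -> cyc_img n k y.
Proof.
move=> nk kk' [z [[zk' dz] ->]]; have lk := lvl_le kk'.
exists (pi k z); split; last by rewrite /pi pr_pr //; apply: lvl_le.
by split; [exact: pr_inCM zk' | rewrite -(pr_dCM HF _ _ lk) dz pr0].
Qed.

Lemma cyc_img_subspace n k l : (n <= k)%N ->
  (forall c, Cab f (lvl n) b c -> List.In c l) -> subspace_on l (cyc_img n k).
Proof.
move=> nk nbl; split=> [|k1 k2 _ _ [z1 [[z1k dz1] ->]] [z2 [[z2k dz2] ->]]|_ c [z [[zk _] ->]] zc].
- by exists czero; rewrite pr0; split=> //; split; [exact: inCM0 | exact: dCM0].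
- exists (lc k1 k2 z1 z2); rewrite pr_lc; split=> //; split; first exact: inCM_lc.
  rewrite dCM_lc // dz1 dz2; apply: functional_extensionality => c.
  by rewrite /lc /czero !mulr0 addr0.
- by apply/nbl/(pr_inCM zk).
Qed.

Lemma cyc_img_stable n : exists N, (n <= N)%N /\
  forall k, (N <= k)%N -> forall y, cyc_img n N y -> cyc_img n k y.
Proof.
have [l [_ nbl]] := Cab_NoDup_cover HF (lvl n) b.
have decr j y : cyc_img n (n + j.+1) y -> cyc_img n (n + j) y.
  by apply: cyc_img_le; [exact: leq_addr | rewrite addnS].
have [N Nstable] :=
  subspace_chain_stable (fun j => cyc_img_subspace (leq_addr j n) nbl) decr.
exists (n + N)%N; split=> [|k nNk y]; first exact: leq_addr.
have nk : (n <= k)%N := leq_trans (leq_addr N n) nNk.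
by rewrite -(subnKC nk); apply: Nstable; rewrite -(leq_add2l n) subnKC.
Qed.

Lemma img_sub_cyc n k y0 y :
  img pi sol n k y0 -> img pi sol n k y -> cyc_img n k (csub y y0).
Proof.
move=> [z0 [[z0k dz0] ->]] [z [[zk dz] ->]]; exists (csub z z0).
by rewrite /pi pr_sub; split=> //; split; [exact: inCM_sub | rewrite dCM_sub // dz dz0 csubxx].
Qed.

Lemma img_add_cyc n k y0 w :
  img pi sol n k y0 -> cyc_img n k w -> img pi sol n k (lc 1 1 y0 w).
Proof.
move=> [z0 [[z0k dz0] ->]] [z [[zk dz] ->]]; exists (lc 1 1 z0 z).
rewrite /pi pr_lc; split=> //; split; first exact: inCM_lc.
rewrite dCM_lc // dz0 dz; apply: functional_extensionality => c.
by rewrite /lc /czero !mul1r addr0.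
Qed.

Lemma img_sol_stable n : exists N, (n <= N)%N /\
  forall k, (N <= k)%N -> forall y, img pi sol n N y -> img pi sol n k y.
Proof.
have [N [nN Nstable]] := cyc_img_stable n; exists N; split=> // k Nk y yN.
have [z zsol] := Zbdry (lvl k).
have y0k : img pi sol n k (pi n z) by exists z.
have y0N := img_le pi_pi sol_pi nN Nk y0k.
suff -> : y = lc 1 1 (pi n z) (csub y (pi n z)).
  by apply: img_add_cyc y0k (Nstable k Nk _ (img_sub_cyc y0N yN)).
by apply: functional_extensionality => c; rewrite /lc /csub !mul1r addrC subrK.
Qed.

Lemma bdryL_of_bdryCM : exists Y, inL f b Y /\ dL f m b Y = Z.
Proof.
have [Y Ysol] := compatible_sol_seq pi_pi sol_pi
  (fun n z zsol => pr_id (proj1 zsol)) (fun k => Zbdry (lvl k)) img_sol_stable.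
have [X [XL dX _]] := family_of_compatible_seq HF ZL
  (fun n => proj1 (Ysol n)) (fun n => proj2 (Ysol n)).
by exists X.
Qed.

End BoundaryLift.

Section CycleLift.
Variables (F : fieldType) (C : Type) (f : C -> R) (m : C -> C -> F).
Hypothesis HF : floer_triple f m.
Variables (b : R) (K : Defs.family F C).
Hypotheses (Kcyc : forall a, cycleCM f m a b (K a))
           (Kcompat : forall a1 a2, Rle a1 a2 ->
                        homCM f m a2 b (pr f a2 (K a1)) (K a2)).

Local Notation chain := (chain F C).
Local Notation czero := (@czero F C).

Let rep n (y : chain) := cycleCM f m (lvl n) b y /\ homCM f m (lvl n) b y (K (lvl n)).

(* If d w = p K' - y with w in CM_{a_n}, then K' - d w is a representative at
   level a_{n+1} projecting onto y, because w also lies in CM_{a_{n+1}} and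
   p_{a_n} fixes it. *)
Lemma rep_lift n y : rep n y -> exists y', rep n.+1 y' /\ pr f (lvl n) y' = y.
Proof.
move=> [[yn dy] [u2 [u2n du2]]].
have n1n : Rle (lvl n.+1) (lvl n) by apply: lvl_le.
have [u1 [u1n du1]] := Kcompat n1n.
have [K'n1 dK'] := Kcyc (lvl n.+1).
set w := csub u1 u2.
have wn : inCM f (lvl n) b w by apply: inCM_sub.
have wn1 : inCM f (lvl n.+1) b w := inCM_widen n1n (Rle_refl b) wn.
have dw : dCM f m (lvl n) b w = csub (pr f (lvl n) (K (lvl n.+1))) y.
  rewrite dCM_sub // du1 du2; apply: functional_extensionality => c.
  by rewrite /csub opprB addrA subrK.
exists (csub (K (lvl n.+1)) (dCM f m (lvl n.+1) b w)); split; first split.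
- split; first by apply: inCM_sub => //; exact: dCM_inCM.
  by rewrite dCM_sub //; [rewrite dK' dCM_dCM // csubxx | exact: dCM_inCM].
- have z0 : inCM f (lvl n.+1) b czero by exact: inCM0.
  exists (csub czero w); split; first exact: inCM_sub.
  rewrite dCM_sub // dCM0.
  by apply: functional_extensionality => c; rewrite /csub sub0r addrAC subrr add0r.
- rewrite pr_sub (pr_dCM HF _ _ n1n) (pr_id wn) dw.
  by apply: functional_extensionality => c; rewrite /csub opprB addrCA subrr addr0.
Qed.

Lemma cycle_family_of_classes :
  exists X, [/\ inL f b X, dL f m b X = @fzero F C
              & forall a, homCM f m a b (X a) (K a)].
Proof.
have [Y Yrep] := dependent_choice_seq (Q := fun n x y => pr f (lvl n) y = x)
  (conj (Kcyc (lvl 0)) (homCM_refl f m _ _ _)) rep_lift.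
have fzeroL : inL f b (@fzero F C) by split=> [a|a1 a2 _]; [exact: inCM0 | exact: pr0].
have [X [XL dX XY]] := family_of_compatible_seq HF fzeroL
  (fun n => proj1 (proj1 (Yrep n))) (fun n => proj2 (Yrep n)).
exists X; split=> // r; have [n nr] := lvl_below r; rewrite (XY n r nr).
exact: (homCM_trans HF (homCM_pr HF nr (proj2 (proj1 (Yrep n)))) (Kcompat nr)).
Qed.

End CycleLift.

Lemma nu_iso_holds (F : fieldType) (C : Type) (f : C -> R) (m : C -> C -> F) b :
  floer_triple f m -> nu_iso f m b.
Proof.
move=> HF; split=> [X1 X2 [X1b X1pr] _ [X2b X2pr] _ X12hom|K Kcyc Kcompat].
  apply: bdryL_of_bdryCM => //; split=> [a|a1 a2 a12]; first exact: inCM_sub.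
  by rewrite /fsub pr_sub X1pr // X2pr.
by have [X [? ? ?]] := cycle_family_of_classes HF Kcyc Kcompat; exists X.
Qed.

Theorem mainTheorem6 (F : fieldType) (C : Type) (f : C -> R) (m : C -> C -> F) :
  floer_triple f m -> tame f m.
Proof.
move=> HF; split; first exact: mu_a_iso_holds.
by split; [move=> b; exact: nu_iso_holds | exact: mu_iso_holds].
Qed.
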